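(* Let $\mathfrak g$ be a finite-dimensional Lie algebra over a field $\mathbb K$ of characteristic zero, $\mathfrak h\subset\mathfrak g$ an ideal, and $f$ a polynomial function on $\mathfrak g^*$ such that $f(x+l)=f(x)$ for all $x\in\mathfrak g^*$ and all $l\in\mathrm{St}(\pi(x))^\perp$. Then $f\in\operatorname{Ann}(\mathfrak h)$.
   Context: $\pi:\mathfrak g^*\to\mathfrak h^*$ is restriction. For $h\in\mathfrak h^*$, $\mathrm{St}(h)=\{\xi\in\mathfrak g\mid\langle h,[\xi,\eta]\rangle=0\ \forall\eta\in\mathfrak h\}$, and $\mathrm{St}(h)^\perp=\{l\in\mathfrak g^*\mid\langle l,\xi\rangle=0\ \forall\xi\in\mathrm{St}(h)\}$. $S(\mathfrak g)$ is the polynomial algebra on $\mathfrak g^*$ with Lie–Poisson bracket $\{f,g\}(x)=\langle x,[df(x),dg(x)]\rangle$, and $\operatorname{Ann}(\mathfrak h)=\{f\in S(\mathfrak g)\mid\{f,\eta\}=0\ \forall\eta\in\mathfrak h\}$. *)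

From HB Require Import structures.
From mathcomp Require Import all_boot all_order all_algebra.
From mathcomp Require Import mpoly.
Set Implicit Arguments. Unset Strict Implicit. Unset Printing Implicit Defensive.
Import GRing.Theory.
Local Open Scope ring_scope.

(* The finite-dimensional Lie algebra g over K is K^n with a
   fixed basis e_0..e_{n-1}; its bracket is given by structure constants
   c : [e_i, e_j] = \sum_k c i j k e_k.  Elements of g are row vectors
   'rV[K]_n (coordinates in the basis e); elements of g^* are row vectors
   'rV[K]_n (coordinates in the dual basis).  Polynomial functions on g^* = S(g) are {mpoly K[n]}
   where 'X_i is the coordinate function x |-> <x, e_i> = e_i in S(g). *)

Section Lie.
Variables (K : fieldType) (n : nat).

Definition is_lie_structure (c : 'I_n -> 'I_n -> 'I_n -> K) : Prop :=
  (forall i j k, c i j k = - c j i k) /\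
  (forall i j l m,
     \sum_k (c i j k * c k l m + c j l k * c k i m + c l i k * c k j m) = 0).

Definition lie_bracket (c : 'I_n -> 'I_n -> 'I_n -> K) (xi eta : 'rV[K]_n)
  : 'rV[K]_n :=
  \row_k \sum_i \sum_j xi 0 i * eta 0 j * c i j k.

Definition pairing (x xi : 'rV[K]_n) : K := \sum_i x 0 i * xi 0 i.

Definition is_ideal (c : 'I_n -> 'I_n -> 'I_n -> K) m (H : 'M[K]_(m, n)) : Prop :=
  forall xi eta : 'rV[K]_n, (eta <= H)%MS -> (lie_bracket c xi eta <= H)%MS.

(* pi : g^* -> h^*, restriction to h.  An element of h^* is represented by a
   function on 'rV_n that is only ever evaluated on elements of h. *)
Definition restr (x : 'rV[K]_n) : 'rV[K]_n -> K := fun eta => pairing x eta.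

(* St(h) = { xi in g | <h, [xi, eta]> = 0 for all eta in h }, for h in h^*
   (note [xi, eta] lies in h since h is an ideal). *)
Definition St (c : 'I_n -> 'I_n -> 'I_n -> K) m (H : 'M[K]_(m, n))
  (hh : 'rV[K]_n -> K) (xi : 'rV[K]_n) : Prop :=
  forall eta : 'rV[K]_n, (eta <= H)%MS -> hh (lie_bracket c xi eta) = 0.

Definition St_perp (c : 'I_n -> 'I_n -> 'I_n -> K) m (H : 'M[K]_(m, n))
  (hh : 'rV[K]_n -> K) (l : 'rV[K]_n) : Prop :=
  forall xi : 'rV[K]_n, St c H hh xi -> pairing l xi = 0.

Definition peval (f : {mpoly K[n]}) (x : 'rV[K]_n) : K := f.@[fun i => x 0 i].

Definition lin (eta : 'rV[K]_n) : {mpoly K[n]} := \sum_i eta 0 i *: 'X_i.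

(* Lie-Poisson bracket {f,g}(x) = <x, [df(x), dg(x)]> in S(g) *)
Definition poisson (c : 'I_n -> 'I_n -> 'I_n -> K) (f g : {mpoly K[n]})
  : {mpoly K[n]} :=
  \sum_i \sum_j \sum_k
     (c i j k *: ('X_k * (mderiv i f) * (mderiv j g))).

Definition Ann (c : 'I_n -> 'I_n -> 'I_n -> K) m (H : 'M[K]_(m, n))
  (f : {mpoly K[n]}) : Prop :=
  forall eta : 'rV[K]_n, (eta <= H)%MS -> poisson c f (lin eta) = 0.

End Lie.

(* A function f satisfying the hypothesis is constant along every line
   x + t l with l in St(pi(x))^perp.  For eta in h, the covector
   l_i = <x, [e_i, eta]> is such a direction: <l, xi> = <x, [xi, eta]>, which
   vanishes for xi in St(pi(x)) by definition.  Differentiating along the line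
   gives sum_i d_i f(x) l_i = 0, and this sum is exactly {f, eta}(x).  So the
   polynomial {f, eta} vanishes on all of g^*, hence is zero since K is
   infinite (characteristic zero). *)
From HB Require Import structures.
From mathcomp Require Import all_boot all_order all_algebra.
From mathcomp Require Import mpoly.
From mathcomp Require Import ring.
Set Implicit Arguments. Unset Strict Implicit. Unset Printing Implicit Defensive.
Import GRing.Theory.
Local Open Scope ring_scope.

Section MpolyCalculus.
Variables (R : comNzRingType) (n : nat).

Definition mcomp_poly (v : 'I_n -> {poly R}) (g : {mpoly R[n]}) : {poly R} :=
  mmap (@polyC R) v g.

Lemma horner_mcomp_poly v g t :
  (mcomp_poly v g).[t] = g.@[fun i => (v i).[t]].
Proof.
rewrite -horner_evalE /mcomp_poly /mmap rmorph_sum mevalE; apply: eq_bigr => m _.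
rewrite rmorphM /= rmorph_prod /= horner_evalE hornerC /mmap1; congr (_ * _).
by apply: eq_bigr => i _; rewrite rmorphXn /= horner_evalE.
Qed.

Lemma mderivXU (i j : 'I_n) : ('X_i : {mpoly R[n]})^`M(j) = ((i == j)%:R)%:MP.
Proof.
rewrite mderivX mnm1E; case: eqVneq => [->|_]; last by rewrite scale0r mpolyC0.
have -> : (U_(j) - U_(j) = 0 :> 'X_{1..n})%MM.
  by apply/mnmP=> k; rewrite mnmBE mnm0E subnn.
by rewrite mpolyX0 scale1r mpolyC1.
Qed.

Lemma meval_at0 (g : {mpoly R[n]}) : g.@[fun _ => 0] = g@_0.
Proof.
elim/mpolyind: g => [|a m p _ _ IH]; first by rewrite meval0 mcoeff0.
rewrite mevalD mevalZ mevalX mcoeffD mcoeffZ mcoeffX IH; congr (_ * _ + _).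
have [->|m_neq0] := eqVneq m 0%MM.
  by rewrite big1 // => i _; rewrite mnm0E expr0.
have [i mi_neq0] : exists i, m i != 0%N.
  apply/existsP; apply: contraR m_neq0; rewrite negb_exists => /forallP m0.
  by apply/eqP/mnmP => i; rewrite mnm0E; apply/eqP; have := m0 i; rewrite negbK.
by rewrite (bigD1 i) //= expr0n (negbTE mi_neq0) mul0r.
Qed.

Section Curve.
Variable v : 'I_n -> {poly R}.

Let chain_rule g :=
  (mcomp_poly v g)^`() = \sum_i mcomp_poly v g^`M(i) * (v i)^`().

Let chain_ruleC a : chain_rule a%:MP.
Proof.
rewrite /chain_rule /mcomp_poly mmapC derivC big1 // => i _.
by rewrite mderivC mmapC mul0r.
Qed.

Let chain_ruleX j : chain_rule 'X_j.
Proof.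
rewrite /chain_rule /mcomp_poly mmapX mmap1U (bigD1 j) //= big1 ?addr0.
  by rewrite mderivXU eqxx mmapC mul1r.
by move=> i ij; rewrite mderivXU eq_sym (negbTE ij) mmapC mul0r.
Qed.

Let chain_ruleD g h : chain_rule g -> chain_rule h -> chain_rule (g + h).
Proof.
rewrite /chain_rule /mcomp_poly mmapD derivD => -> ->; rewrite -big_split /=.
by apply: eq_bigr => i _; rewrite mderivD mmapD mulrDl.
Qed.

Let chain_ruleM g h : chain_rule g -> chain_rule h -> chain_rule (g * h).
Proof.
rewrite /chain_rule /mcomp_poly rmorphM derivM => -> ->.
rewrite mulr_suml mulr_sumr -big_split /=; apply: eq_bigr => i _.
rewrite mderivM mmapD !rmorphM mulrDl; congr (_ + _); ring.
Qed.

Lemma deriv_mcomp_poly g :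
  (mcomp_poly v g)^`() = \sum_i mcomp_poly v g^`M(i) * (v i)^`().
Proof.
elim/mpolyind: g => [|a m p _ _ IH]; first by rewrite -mpolyC0; apply: chain_ruleC.
apply: chain_ruleD => //; rewrite -mul_mpolyC; apply: chain_ruleM => //.
have chain_rule1 : chain_rule 1 by rewrite -mpolyC1.
rewrite mpolyXE_id; elim/big_ind: _ => // i _.
by elim: (m i) => [|k IHk]; rewrite ?expr0 // exprS; apply: chain_ruleM.
Qed.

End Curve.

End MpolyCalculus.

Section CharZero.
Variables (K : fieldType) (n : nat).
Hypothesis K0 : [pchar K] =i pred0.

Lemma pchar0_natr_inj : injective (fun k : nat => k%:R : K).
Proof.
suff le_inj a b : (a <= b)%N -> a%:R = b%:R :> K -> a = b.
  by move=> a b; case: (leqP a b) => [/le_inj//|/ltnW/le_inj ab /esym/ab].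
move=> le_ab /esym/eqP; rewrite -subr_eq0 -natrB // ((pcharf0P K).1 K0) subn_eq0.
by move=> le_ba; apply/eqP; rewrite eqn_leq le_ab.
Qed.

Lemma poly_const_eval (q : {poly K}) :
  (forall t, q.[t] = q.[0]) -> q = (q.[0])%:P.
Proof.
move=> q_const; apply/eqP; rewrite -subr_eq0; apply/eqP.
pose ts := [seq k%:R : K | k <- iota 0 (size (q - (q.[0])%:P))].
apply: (@roots_geq_poly_eq0 _ _ ts).
- by apply/allP => t _; rewrite /root hornerD hornerN hornerC q_const subrr.
- by rewrite map_inj_uniq ?iota_uniq //; apply: pchar0_natr_inj.
- by rewrite size_map size_iota.
Qed.

Lemma mderiv_dir_eq0 (g : {mpoly K[n]}) (x l : 'I_n -> K) :
  (forall t, g.@[fun i => x i + t * l i] = g.@[x]) ->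
  \sum_i (g^`M(i)).@[x] * l i = 0.
Proof.
move=> g_const.
pose v i := (x i)%:P + l i *: 'X.
have v_t t : (fun i => (v i).[t]) =1 (fun i => x i + t * l i).
  by move=> i; rewrite /v hornerD hornerC hornerZ hornerX mulrC.
have v_0 : (fun i => (v i).[0]) =1 x.
  by move=> i; rewrite v_t mul0r addr0.
have /poly_const_eval/(congr1 deriv) : forall t, (mcomp_poly v g).[t] = (mcomp_poly v g).[0].
  by move=> t; rewrite !horner_mcomp_poly (meval_eq _ (v_t _)) (meval_eq _ v_0); apply: g_const.
rewrite derivC deriv_mcomp_poly => /(congr1 (horner^~ 0)).
rewrite horner0 horner_sum => E; rewrite -[RHS]E; apply: eq_bigr => i _.
rewrite hornerM horner_mcomp_poly (meval_eq _ v_0) /v derivD derivC derivZ derivX.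
by rewrite add0r hornerZ hornerC mulr1.
Qed.

Lemma mderiv_meval_eq0 (g : {mpoly K[n]}) i :
  (forall x, g.@[x] = 0) -> forall x, (g^`M(i)).@[x] = 0.
Proof.
move=> g0 x; have := @mderiv_dir_eq0 g x (fun j => (i == j)%:R).
rewrite (bigD1 i) //= eqxx mulr1 big1 ?addr0; first by apply => t; rewrite !g0.
by move=> j ji; rewrite eq_sym (negbTE ji) mulr0.
Qed.

(* The m-th derivative at 0 is m! times the m-th coefficient. *)
Lemma meval_eq0_mpoly (g : {mpoly K[n]}) : (forall x, g.@[x] = 0) -> g = 0.
Proof.
move=> g0; apply/mpolyP => m; rewrite mcoeff0.
have gm0 x : (g^`M[m]).@[x] = 0.
  by rewrite mderivm_foldr; elim: (flatten _) x => [|i s IH] x /=;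
    [apply: g0 | apply: mderiv_meval_eq0].
have := gm0 (fun _ => 0); rewrite meval_at0 mcoeff_mderivm addm0 => /eqP.
rewrite -mulr_natr mulf_eq0 ((pcharf0P K).1 K0) => /orP[/eqP //|].
by rewrite eqn0Ngt prodn_gt0 // => i; rewrite ffactnn fact_gt0.
Qed.

End CharZero.

Section CoadjointDirection.
Variables (K : fieldType) (n : nat) (c : 'I_n -> 'I_n -> 'I_n -> K).

(* The covector xi |-> <y, [xi, eta]> in coordinates. *)
Definition coadjoint (eta y : 'rV[K]_n) : 'rV[K]_n :=
  \row_i \sum_j \sum_k y 0 k * c i j k * eta 0 j.

Lemma pairing_coadjoint eta y xi :
  pairing (coadjoint eta y) xi = pairing y (lie_bracket c xi eta).
Proof.
rewrite /pairing; under eq_bigr do rewrite mxE big_distrl /=.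
under [RHS]eq_bigr do rewrite mxE big_distrr /=.
rewrite [RHS]exchange_big; apply: eq_bigr => i _.
under [RHS]eq_bigr do rewrite big_distrr /=.
rewrite [RHS]exchange_big; apply: eq_bigr => j _.
by rewrite big_distrl; apply: eq_bigr => k _ /=; ring.
Qed.

Lemma pairingZl t (l xi : 'rV[K]_n) : pairing (t *: l) xi = t * pairing l xi.
Proof. by rewrite /pairing mulr_sumr; apply: eq_bigr => i _; rewrite mxE mulrA. Qed.

Lemma St_perp_coadjoint m (H : 'M[K]_(m, n)) eta y t :
  (eta <= H)%MS -> St_perp c H (restr y) (t *: coadjoint eta y).
Proof.
by move=> eta_h xi xi_St; rewrite pairingZl pairing_coadjoint [pairing _ _]xi_St ?mulr0.
Qed.

Lemma mderiv_lin (eta : 'rV[K]_n) j : (lin eta)^`M(j) = (eta 0 j)%:MP.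
Proof.
rewrite /lin (big_morph _ (mderivD j) (mderiv0 _ j)) (bigD1 j) //=.
rewrite mderivZ mderivXU eqxx mpolyC1 big1 ?addr0 -?mul_mpolyC ?mulr1 // => i ij.
by rewrite mderivZ mderivXU (negbTE ij) mpolyC0 scaler0.
Qed.

Lemma peval_poisson_lin (f : {mpoly K[n]}) eta y :
  peval (poisson c f (lin eta)) y =
  \sum_i peval f^`M(i) y * coadjoint eta y 0 i.
Proof.
rewrite /peval /poisson (big_morph _ (mevalD _) (meval0 _)); apply: eq_bigr => i _.
rewrite (big_morph _ (mevalD _) (meval0 _)) mxE mulr_sumr; apply: eq_bigr => j _.
rewrite (big_morph _ (mevalD _) (meval0 _)) mulr_sumr; apply: eq_bigr => k _.
by rewrite mevalZ !mevalM mevalXU mderiv_lin mevalC; ring.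
Qed.

End CoadjointDirection.

Theorem corollary2 (K : fieldType) (n : nat)
  (c : 'I_n -> 'I_n -> 'I_n -> K) (m : nat) (H : 'M[K]_(m, n))
  (f : {mpoly K[n]}) :
  [pchar K] =i pred0 ->
  is_lie_structure c ->
  is_ideal c H ->
  (forall x l : 'rV[K]_n, St_perp c H (restr x) l ->
     peval f (x + l) = peval f x) ->
  Ann c H f.
Proof.
move=> K0 _ _ f_inv eta eta_h; apply: (meval_eq0_mpoly K0) => y.
pose x := \row_i y i : 'rV[K]_n.
have -> : (poisson c f (lin eta)).@[y] = peval (poisson c f (lin eta)) x.
  by apply: meval_eq => i; rewrite mxE.
rewrite peval_poisson_lin.
apply: (mderiv_dir_eq0 K0) => t.
have := f_inv x _ (St_perp_coadjoint (y := x) t eta_h); rewrite /peval => <-.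
by apply: meval_eq => i; rewrite !mxE.
Qed.
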